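(* Let $n=2p$ with $p\ge 11$ prime, and let $G(\circ)$ be a group of order $n$ on $G$. Then $\delta_{\cong}(\circ)<\delta_{\not\cong}(\circ)$.
   Context: $G$ is a set of size $n$. $\mathrm{dist}(\circ,\ast)=|\{(a,b)\in G\times G:a\circ b\ne a\ast b\}|$. $\delta_{\cong}(\circ)=\min\{\mathrm{dist}(\circ,\ast): G(\ast)\cong G(\circ),\ G(\ast)\ne G(\circ)\}$ and $\delta_{\not\cong}(\circ)=\min\{\mathrm{dist}(\circ,\ast): G(\ast)\not\cong G(\circ)\}$ (minima over groups $G(\ast)$ defined on $G$). *)

From mathcomp Require Import all_boot all_order all_fingroup.
Set Implicit Arguments. Unset Strict Implicit. Unset Printing Implicit Defensive.

(* A binary operation on the finite set G (carrier T) is a finite function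
   T * T -> T; [binop T] is a finite type, so we can take minima over it. *)
Definition binop (T : finType) := {ffun T * T -> T}.

Definition mulop (T : finType) (o : binop T) (x y : T) : T := o (x, y).

Definition is_group (T : finType) (o : binop T) : bool :=
  [forall x, forall y, forall z,
      mulop o (mulop o x y) z == mulop o x (mulop o y z)] &&
  [exists e, [forall x, (mulop o e x == x) && (mulop o x e == x)] &&
             [forall x, exists y, (mulop o x y == e) && (mulop o y x == e)]].

Definition isomorphic (T : finType) (o1 o2 : binop T) : bool :=
  [exists f : {perm T}, forall x, forall y,
      f (mulop o1 x y) == mulop o2 (f x) (f y)].

Definition dist (T : finType) (o1 o2 : binop T) : nat :=
  #|[set ab : T * T | o1 ab != o2 ab]|.

(* Minimum of dist(o, * ) over groups * on G satisfying P; the default value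
   #|T| * #|T| (an upper bound for any distance) is only used if no such
   group exists. *)
Definition delta_min (T : finType) (o : binop T) (P : pred (binop T)) : nat :=
  \big[minn/#|T| * #|T|]_(s : binop T | is_group s && P s) dist o s.

Definition delta_iso (T : finType) (o : binop T) : nat :=
  delta_min o (fun s => isomorphic s o && (s != o)).

Definition delta_noniso (T : finType) (o : binop T) : nat :=
  delta_min o (fun s => ~~ isomorphic s o).

(* A group of order 2p is cyclic when abelian and dihedral otherwise, so two
   group structures of order 2p on G are isomorphic iff both or neither are
   abelian.  Transporting o along the transposition of its unit e and some
   a <> e gives a different isomorphic group that agrees with o except on the
   pairs having e or a as a factor or as product: at most 6n pairs.  A
   nonabelian group of order 2p has 3p(p - 1) noncommuting ordered pairs, and
   at each of them it disagrees with an abelian operation at (x, y) or at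
   (y, x); hence a nonisomorphic group lies at distance at least 3p(p - 1)/2,
   which exceeds 6n = 12p for p >= 11.  Group structures on G are compared
   with finite groups through their right regular representations. *)

From mathcomp Require Import all_boot all_order all_fingroup all_solvable zify.
Set Implicit Arguments. Unset Strict Implicit. Unset Printing Implicit Defensive.
Import Order.TTheory.

Local Open Scope group_scope.

Lemma sub_card_gt_half (gT : finGroupType) (G H : {group gT}) :
  H \subset G -> (#|G| < 2 * #|H|)%N -> H :=: G.
Proof.
move=> sHG ltG; apply: index1g => //.
have := Lagrange sHG; have := cardG_gt0 H; have := indexg_gt0 G H; nia.
Qed.

Lemma eq_cycle_prime (gT : finGroupType) (x h : gT) :
  prime #[x] -> h \in <[x]> -> h != 1 -> <[h]> = <[x]>.
Proof.
move=> pr_x xh nth; apply/eqP; rewrite eqEcard cycle_subG xh /= -!orderE.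
have /prime_nt_dvdP -> // : #[h] %| #[x] by rewrite orderE order_dvdG.
by rewrite order_eq1.
Qed.

Definition noncomm_pairs (gT : finGroupType) (G : {set gT}) :=
  [set uv : gT * gT | [&& uv.1 \in G, uv.2 \in G & uv.1 * uv.2 != uv.2 * uv.1]].

Section NonabelianOrder2p.

Variables (gT : finGroupType) (G : {group gT}) (p : nat) (x : gT).
Hypotheses (p_pr : prime p) (oG : #|G| = (2 * p)%N) (nabG : ~~ abelian G).
Hypotheses (Gx : x \in G) (ox : #[x] = p).

Local Notation P := <[x]>.

Let sPG : P \subset G. Proof. by rewrite cycle_subG. Qed.

Let oP : #|P| = p. Proof. by rewrite -orderE. Qed.

Lemma noncommute_out_in g h : g \in G :\: P -> h \in P :\ 1 -> g * h != h * g.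
Proof.
case/setDP=> Gg Pg /setD1P[nth Ph]; apply/eqP=> cgh; case/negP: nabG.
have cPg : P \subset 'C(<[g]>).
  by rewrite cent_cycle -(eq_cycle_prime _ Ph nth) ?ox // cycle_subG; apply/cent1P.
have <- : P <*> <[g]> = G.
  apply: sub_card_gt_half; first by rewrite join_subG sPG cycle_subG.
  rewrite oG ltn_pmul2l // -oP; apply: proper_card; rewrite properEneq joing_subl andbT.
  by apply: contraNneq Pg => ->; rewrite mem_gen // inE cycle_id orbT.
by rewrite abelianY !cycle_abelian centsC.
Qed.

Lemma noncommute_out_out g g' :
  g \in G :\: P -> g' \in G :\: P -> g != g' -> g * g' != g' * g.
Proof.
move=> gGP g'GP ngg'.
have iGP : #|G : P| = 2.
  by apply/eqP; rewrite -(eqn_pmul2l (cardG_gt0 P)) Lagrange // oP oG mulnC.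
have : g' * g^-1 \in P :\ 1.
  by rewrite !inE -mem_rcoset (rcoset_index2 sPG iGP gGP) g'GP -eq_mulgV1 eq_sym ngg'.
move/(noncommute_out_in gGP); apply: contraNN => /eqP cgg'.
by rewrite mulgA cgg' mulgK mulgKV.
Qed.

Lemma noncommute_out u v :
  u \in G :\: P -> v \in G :\ 1 -> u != v -> u * v != v * u.
Proof.
move=> uGP /setD1P[v1 Gv] nuv; have [Pv | Pv] := boolP (v \in P).
  by apply: noncommute_out_in; rewrite // !inE v1.
by apply: noncommute_out_out; rewrite // inE Pv.
Qed.

Lemma card_noncomm_pairs_cycle : (3 * (p * (p - 1)) <= #|noncomm_pairs G|)%N.
Proof.
have p_gt0 := prime_gt0 p_pr.
set A := G :\: P.
have oA : #|A| = p by rewrite cardsDS // oG oP; lia.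
have oP1 : #|P :\ 1| = (p - 1)%N by rewrite cardsDS ?sub1set ?group1 // cards1 oP.
have oG1 : #|G :\ 1| = (2 * p - 1)%N by rewrite cardsDS ?sub1set ?group1 // cards1 oG.
have A1 u : u \in A -> u \in G :\ 1.
  by case/setDP=> Gu Pu; rewrite !inE Gu andbT; apply: contraNneq Pu => ->.
set Y := setX A (G :\ 1) :\: [set (u, u) | u in A].
set Z := setX (P :\ 1) A.
have oY : #|Y| = (p * (2 * p - 1) - p)%N.
  rewrite cardsDS ?cardsX ?card_imset ?oA ?oG1 //; first by move=> u v [].
  by apply/subsetP=> _ /imsetP[u Au ->]; rewrite inE /= Au A1.
have oZ : #|Z| = ((p - 1) * p)%N by rewrite cardsX oP1 oA.
have dYZ : [disjoint Y & Z].
  by apply/pred0P=> -[u v]; rewrite /= !inE /=; case: (u \in P); rewrite ?andbF.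
have sYZ : Y :|: Z \subset noncomm_pairs G.
  apply/subsetP=> -[u v] /setUP[/setDP[/setXP[Au Gv1] nuv] | /setXP[Pu1 Av]].
    have /setD1P[_ Gu] := A1 u Au; have /setD1P[_ Gv] := Gv1.
    rewrite !inE /= Gu Gv noncommute_out //.
    by apply: contraNneq nuv => <-; apply: imset_f.
  have Gu1 := subsetP (setSD _ sPG) u Pu1.
  have /setD1P[_ Gu] := Gu1; have /setD1P[_ Gv] := A1 v Av.
  rewrite !inE /= Gu Gv eq_sym noncommute_out //.
  by apply: contraTneq Av => ->; rewrite inE (setD1P Pu1).2.
have /eqP oYZ : #|Y :|: Z| == (#|Y| + #|Z|)%N by rewrite (leq_card_setU Y Z).2.
apply: leq_trans (subset_leq_card sYZ); rewrite oYZ oY oZ; clear -p_gt0; nia.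
Qed.

End NonabelianOrder2p.

Section Order2p.

Variables (gT : finGroupType) (G : {group gT}) (p : nat).
Hypotheses (p_pr : prime p) (p_gt2 : 2 < p) (oG : #|G| = (2 * p)%N).

Lemma order2p_elt_p : {x | x \in G & #[x] = p}.
Proof. by apply: Cauchy; rewrite // oG dvdn_mull. Qed.

Lemma order2p_elt_2 : {y | y \in G & #[y] = 2}.
Proof. by apply: Cauchy; rewrite // oG dvdn_mulr. Qed.

Lemma abelian_order2p_cyclic : abelian G -> cyclic G.
Proof.
move=> abG; have [x Gx ox] := order2p_elt_p; have [y Gy oy] := order2p_elt_2.
have cop_xy : coprime #[x] #[y] by rewrite ox oy prime_coprime // dvdn_prime2 // gtn_eqF.
have cxy : commute x y := centsP abG x Gx y Gy.
have oxy : #[x * y] = (2 * p)%N by rewrite orderM // ox oy mulnC.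
apply/cyclicP; exists (x * y); apply/eqP.
by rewrite eq_sym eqEcard cycle_subG groupM // oG -orderE oxy leqnn.
Qed.

Lemma nonabelian_order2p_dihedral : ~~ abelian G -> G \isog [set: 'D_(2 * p)].
Proof.
move=> nabG; have [x Gx ox] := order2p_elt_p; have [y Gy oy] := order2p_elt_2.
have Py : y \notin <[x]>.
  apply/negP=> /order_dvdG; rewrite -orderE ox oy dvdn_prime2 //.
  by move/eqP=> p2; move: p_gt2; rewrite -p2.
have xP1 : x \in <[x]> :\ 1 by rewrite !inE cycle_id -order_eq1 ox eqn_leq leqNgt prime_gt1.
have yGP : y \in G :\: <[x]> by rewrite inE Py.
have y_ne_yx : y != y ^ x.
  apply: contraNneq (noncommute_out_in p_pr oG nabG Gx ox yGP xP1) => yx.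
  by rewrite conjgC -yx.
have isoH := involutions_gen_dihedral oy (etrans (orderJ y x) oy) y_ne_yx.
set H := <<[set y; y ^ x]>> in isoH.
have sHG : H \subset G by rewrite gen_subG subUset !sub1set Gy groupJ.
have yH : y \in H by rewrite mem_gen ?set21.
have /dvdnP[k oH] : 2 %| #|H| by rewrite -oy order_dvdG.
have : k %| p by rewrite -(@dvdn_pmul2r 2) // -oH mulnC -oG cardSg.
case/primeP: p_pr => _ /[apply] /orP[/eqP k1 | /eqP kp].
  have : #|[set y; y ^ x]| <= #|H :\ 1|.
    apply/subset_leq_card/subsetP => z /set2P[] ->; rewrite !inE -order_eq1 ?orderJ oy //.
    by rewrite mem_gen ?set22.
  by rewrite cards2 y_ne_yx cardsDS ?sub1set ?group1 // cards1 oH k1.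
have HG : H = G by apply/eqP; rewrite eqEcard sHG oH oG kp mulnC /=.
by rewrite oH kp mulnC HG in isoH.
Qed.

End Order2p.

Lemma isog_order2p (gT rT : finGroupType) (G : {group gT}) (H : {group rT}) p :
  prime p -> 2 < p -> #|G| = (2 * p)%N -> #|H| = (2 * p)%N ->
  abelian G = abelian H -> G \isog H.
Proof.
move=> p_pr p_gt2 oG oH abGH; have [abG | nabG] := boolP (abelian G).
  have cycH : cyclic H by apply: abelian_order2p_cyclic oH _; rewrite -?abGH.
  by rewrite isog_cyclic_card ?(abelian_order2p_cyclic p_pr p_gt2 oG) // cycH oG oH eqxx.
apply: isog_trans (nonabelian_order2p_dihedral p_pr p_gt2 oG nabG) _.
by rewrite isog_sym nonabelian_order2p_dihedral // -abGH.
Qed.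

Lemma card_noncomm_pairs_order2p (gT : finGroupType) (G : {group gT}) p :
  prime p -> #|G| = (2 * p)%N -> ~~ abelian G ->
  (3 * (p * (p - 1)) <= #|noncomm_pairs G|)%N.
Proof.
move=> p_pr oG nabG; have [x Gx ox] := order2p_elt_p p_pr oG.
exact: card_noncomm_pairs_cycle p_pr oG nabG Gx ox.
Qed.

Local Close Scope group_scope.

Definition noncomm_op (T : finType) (o : binop T) :=
  [set ab : T * T | mulop o ab.1 ab.2 != mulop o ab.2 ab.1].

Section CayleyGroup.

Variables (T : finType) (o : binop T).
Hypothesis o_group : is_group o.

Lemma mulopA x y z : mulop o (mulop o x y) z = mulop o x (mulop o y z).
Proof. by case/andP: o_group => /forallP/(_ x)/forallP/(_ y)/forallP/(_ z)/eqP. Qed.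

Lemma op_unit_subproof : exists e,
  [forall x, (mulop o e x == x) && (mulop o x e == x)] &&
  [forall x, exists y, (mulop o x y == e) && (mulop o y x == e)].
Proof. by case/andP: o_group => _ /existsP. Qed.

Definition op_unit := xchoose op_unit_subproof.

Lemma mul1op x : mulop o op_unit x = x.
Proof. by case/andP: (xchooseP op_unit_subproof) => /forallP/(_ x)/andP[/eqP]. Qed.

Lemma mulop1 x : mulop o x op_unit = x.
Proof. by case/andP: (xchooseP op_unit_subproof) => /forallP/(_ x)/andP[_ /eqP]. Qed.

Lemma op_inv_subproof x : exists y, (mulop o x y == op_unit) && (mulop o y x == op_unit).
Proof. by case/andP: (xchooseP op_unit_subproof) => _ /forallP/(_ x)/existsP. Qed.

Definition op_inv x := xchoose (op_inv_subproof x).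

Lemma mulopV x : mulop o x (op_inv x) = op_unit.
Proof. by case/andP: (xchooseP (op_inv_subproof x)) => /eqP. Qed.

Lemma mulVop x : mulop o (op_inv x) x = op_unit.
Proof. by case/andP: (xchooseP (op_inv_subproof x)) => _ /eqP. Qed.

Lemma mulopI x : injective (mulop o x).
Proof.
by move=> y z /(congr1 (mulop o (op_inv x))); rewrite -!mulopA mulVop !mul1op.
Qed.

Lemma mulIop x : injective (mulop o ^~ x).
Proof.
by move=> y z /(congr1 (mulop o ^~ (op_inv x))); rewrite /= !mulopA mulopV !mulop1.
Qed.

Definition rmulop x : {perm T} := perm (@mulIop x).

Lemma rmulopE x z : rmulop x z = mulop o z x.
Proof. exact: permE. Qed.

Lemma rmulopM x y : rmulop (mulop o x y) = (rmulop x * rmulop y)%g.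
Proof. by apply/permP=> z; rewrite permM !rmulopE mulopA. Qed.

Lemma rmulop_inj : injective rmulop.
Proof. by move=> x y exy; rewrite -(mul1op x) -(mul1op y) -!rmulopE exy. Qed.

Lemma group_set_cayley : group_set (rmulop @: T).
Proof.
apply/group_setP; split.
  by apply/imsetP; exists op_unit => //; apply/permP=> z; rewrite perm1 rmulopE mulop1.
by move=> _ _ /imsetP[x _ ->] /imsetP[y _ ->]; rewrite -rmulopM imset_f.
Qed.

Canonical cayley := Group group_set_cayley.

Lemma mem_cayley x : rmulop x \in cayley.
Proof. exact: imset_f. Qed.

Lemma card_cayley : #|cayley| = #|T|.
Proof. exact: card_imset rmulop_inj. Qed.

Lemma rmulop_commute x y :
  ((rmulop x * rmulop y)%g == (rmulop y * rmulop x)%g) = (mulop o x y == mulop o y x).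
Proof. by rewrite -!rmulopM (inj_eq rmulop_inj). Qed.

Lemma commutative_opP :
  reflect (forall x y, mulop o x y = mulop o y x) (abelian cayley).
Proof.
apply: (iffP centsP) => [cG x y | co _ /imsetP[x _ ->] _ /imsetP[y _ ->]].
  by apply/eqP; rewrite -rmulop_commute; apply/eqP/cG; apply: imset_f.
by apply/eqP; rewrite rmulop_commute co.
Qed.

Lemma card_noncomm_pairs_cayley : #|noncomm_pairs cayley| = #|noncomm_op o|.
Proof.
rewrite -(card_imset _ (f := fun ab => (rmulop ab.1, rmulop ab.2))); last first.
  by move=> [x y] [x' y'] [/rmulop_inj -> /rmulop_inj ->].
apply: eq_card=> -[u v]; rewrite !inE /=; apply/idP/imsetP.
  case/and3P=> /imsetP[x _ ->] /imsetP[y _ ->] nc.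
  by exists (x, y); rewrite // inE -rmulop_commute.
by case=> -[x y]; rewrite inE -rmulop_commute => nc [-> ->]; rewrite !imset_f.
Qed.

End CayleyGroup.

Lemma isomorphic_of_isog (T : finType) (o s : binop T)
    (o_group : is_group o) (s_group : is_group s) :
  (cayley s_group \isog cayley o_group)%g -> isomorphic s o.
Proof.
case/isogP=> f f_inj f_im.
(* Right translations send the unit to their parameter. *)
pose phi x := f (rmulop s_group x) (op_unit o_group).
have rmulop_phi x : rmulop o_group (phi x) = f (rmulop s_group x).
  have : f (rmulop s_group x) \in (f @* cayley s_group)%g by rewrite mem_morphim ?mem_cayley.
  by rewrite f_im => /imsetP[y _ fx]; rewrite /phi fx rmulopE mul1op.
have phi_inj : injective phi.
  move=> x y exy; apply: (@rmulop_inj _ _ s_group).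
  by apply: (injmP f_inj); rewrite ?mem_cayley // -!rmulop_phi exy.
apply/existsP; exists (perm phi_inj); apply/forallP=> x; apply/forallP=> y.
rewrite !permE; apply/eqP/(@rmulop_inj _ _ o_group).
by rewrite rmulopM !rmulop_phi rmulopM morphM ?mem_cayley.
Qed.

Lemma dist_sym (T : finType) (o s : binop T) : dist o s = dist s o.
Proof. by apply: eq_card=> ab; rewrite !inE eq_sym. Qed.

Lemma card_noncomm_op_le_dist (T : finType) (o s : binop T) :
  (forall x y, mulop o x y = mulop o y x) -> #|noncomm_op s| <= 2 * dist o s.
Proof.
move=> o_comm; set D := [set ab | o ab != s ab].
pose swap (ab : T * T) := (ab.2, ab.1).
have swap_inj : injective swap by move=> [x y] [x' y'] [-> ->].
(* Since o commutes, s must disagree with o at (x, y) or at (y, x). *)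
have sD : noncomm_op s \subset D :|: swap @^-1: D.
  apply/subsetP=> -[x y]; rewrite !inE /=; apply: contraNT.
  rewrite negb_or !negbK /swap /= => /andP[/eqP oxy /eqP oyx].
  by rewrite /mulop -oxy -oyx; apply/eqP; exact: o_comm.
apply: leq_trans (subset_leq_card sD) _.
by rewrite mul2n -addnn (leq_trans (leq_card_setU _ _)) // card_preimset.
Qed.

Section ConjugateOperation.

Variables (T : finType) (o : binop T) (f : {perm T}).

Definition conj_op : binop T := [ffun ab => (f^-1)%g (o (f ab.1, f ab.2))].

Lemma mulop_conj x y : mulop conj_op x y = (f^-1)%g (mulop o (f x) (f y)).
Proof. by rewrite /mulop ffunE. Qed.

Lemma isomorphic_conj_op : isomorphic conj_op o.
Proof.
by apply/existsP; exists f; apply/forallP=> x; apply/forallP=> y; rewrite mulop_conj permKV.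
Qed.

Hypothesis o_group : is_group o.

Lemma conj_op_group : is_group conj_op.
Proof.
apply/andP; split.
  by apply/forallP=> x; apply/forallP=> y; apply/forallP=> z; rewrite !mulop_conj !permKV mulopA.
apply/existsP; exists ((f^-1)%g (op_unit o_group)); apply/andP; split.
  by apply/forallP=> x; rewrite !mulop_conj permKV mul1op mulop1 permK !eqxx.
apply/forallP=> x; apply/existsP; exists ((f^-1)%g (op_inv o_group (f x))).
by rewrite !mulop_conj permKV mulopV mulVop !eqxx.
Qed.

Lemma dist_conj_op (S : {set T}) :
  {in ~: S, f =1 id} -> dist o conj_op <= 3 * (#|S| * #|T|).
Proof.
(* Pairs with product in S correspond, through the bijection lmul, to pairs
   with second entry in S. *)
move=> fS; pose lmul (ab : T * T) := (ab.1, o ab).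
have lmul_inj : injective lmul.
  by move=> [x y] [x' y'] [ex]; rewrite ex => /(mulopI o_group) ->.
have sD : [set ab | o ab != conj_op ab] \subset
    setX S setT :|: setX setT S :|: lmul @^-1: setX setT S.
  apply/subsetP=> -[x y]; rewrite !inE /= andbT; apply: contraR.
  rewrite !negb_or -!in_setC => /andP[/andP[Sx Sy] Sxy].
  have fxy : f (o (x, y)) = o (x, y) := fS _ Sxy.
  rewrite -[conj_op _]/(mulop conj_op x y) mulop_conj (fS x Sx) (fS y Sy).
  by rewrite /mulop -{2}fxy permK.
set n := (#|S| * #|T|)%N.
have oX1 : #|setX S [set: T]| = n by rewrite cardsX cardsT.
have oX2 : #|setX [set: T] S| = n by rewrite cardsX cardsT mulnC.
have oX3 : #|lmul @^-1: setX [set: T] S| = n by rewrite card_preimset.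
apply: leq_trans (subset_leq_card sD) _; apply: leq_trans (leq_card_setU _ _) _.
rewrite oX3 mulSn addnC leq_add2l; apply: leq_trans (leq_card_setU _ _) _.
by rewrite oX1 oX2 mulSn mul1n.
Qed.

End ConjugateOperation.

Lemma conj_op_tperm_neq (T : finType) (o : binop T) (o_group : is_group o) a :
  a != op_unit o_group -> conj_op o (tperm (op_unit o_group) a) != o.
Proof.
move=> a_neq1; apply: contra_neq a_neq1 => conj_o.
have := mulop_conj o (tperm (op_unit o_group) a) a (op_unit o_group).
by rewrite conj_o tpermR tpermL mul1op tpermV tpermR mulop1.
Qed.

Lemma delta_min_le (T : finType) (o s : binop T) (P : pred (binop T)) :
  is_group s -> P s -> delta_min o P <= dist o s.
Proof.
move=> s_group Ps; rewrite /delta_min -minEnat.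
by apply: (@bigmin_le_cond _ nat); rewrite s_group.
Qed.

Lemma delta_min_gt (T : finType) (o : binop T) (P : pred (binop T)) m :
  m < #|T| * #|T| -> (forall s, is_group s -> P s -> m < dist o s) ->
  m < delta_min o P.
Proof.
move=> m_lt m_dist; rewrite /delta_min -minEnat; apply/(@bigmin_gtP _ nat); split=> // s.
by case/andP; apply: m_dist.
Qed.

Lemma delta_iso_le (T : finType) (o : binop T) :
  is_group o -> 1 < #|T| -> delta_iso o <= 6 * #|T|.
Proof.
move=> o_group T_gt1; set e := op_unit o_group.
have [a a_neq1] : exists a, a != e.
  have [x [y [_ _ nxy]]] := card_gt1P T_gt1.
  by have [xe | ] := eqVneq x e; [exists y; rewrite -xe eq_sym | exists x].
apply: leq_trans (delta_min_le _ (conj_op_group (tperm e a) o_group) _) _.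
  by rewrite isomorphic_conj_op conj_op_tperm_neq.
apply: leq_trans (dist_conj_op o_group (S := [set e; a]) _) _.
  by move=> x; rewrite !inE negb_or => /andP[xe xa]; apply: tpermD; rewrite eq_sym.
by rewrite cards2 (eq_sym e) a_neq1 mulnA.
Qed.

Section NonisomorphicOrder2p.

Variables (T : finType) (o s : binop T) (p : nat).
Hypotheses (o_group : is_group o) (s_group : is_group s).
Hypotheses (p_pr : prime p) (p_gt2 : 2 < p) (oT : #|T| = 2 * p).

Lemma dist_abelian_nonabelian_order2p :
  abelian (cayley o_group) -> ~~ abelian (cayley s_group) ->
  3 * (p * (p - 1)) <= 2 * dist o s.
Proof.
move=> /commutative_opP o_comm nab_s; apply: leq_trans (card_noncomm_op_le_dist _ o_comm).
by rewrite -card_noncomm_pairs_cayley card_noncomm_pairs_order2p // card_cayley.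
Qed.

Lemma abelian_cayley_neq : ~~ isomorphic s o ->
  abelian (cayley o_group) != abelian (cayley s_group).
Proof.
apply: contraNN => /eqP ab_os; apply: isomorphic_of_isog.
by apply: (isog_order2p p_pr p_gt2); rewrite ?card_cayley.
Qed.

End NonisomorphicOrder2p.

Lemma dist_noniso_order2p (T : finType) (o s : binop T) p :
  is_group o -> is_group s -> prime p -> 2 < p -> #|T| = 2 * p ->
  ~~ isomorphic s o -> 3 * (p * (p - 1)) <= 2 * dist o s.
Proof.
move=> o_group s_group p_pr p_gt2 oT /(abelian_cayley_neq o_group s_group p_pr p_gt2 oT).
have [ab_o | nab_o] := boolP (abelian _) => [nab_s | /negbNE ab_s].
  exact: dist_abelian_nonabelian_order2p.
by rewrite dist_sym; apply: dist_abelian_nonabelian_order2p.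
Qed.

Theorem lemma4p12 (p : nat) (T : finType) (o : binop T) :
  prime p -> 11 <= p -> #|T| = 2 * p -> is_group o ->
  delta_iso o < delta_noniso o.
Proof.
move=> p_pr p_ge11 oT o_group; have p_gt2 : 2 < p by lia.
apply: leq_ltn_trans (delta_iso_le o_group _) _; first by rewrite oT; lia.
apply: delta_min_gt => [|s s_group noniso]; first by rewrite oT; nia.
have := dist_noniso_order2p o_group s_group p_pr p_gt2 oT noniso.
(* 3 p (p - 1) > 2 * 6 * (2 p) exactly when p > 9. *)
by rewrite oT; nia.
Qed.
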